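(* Let $\mathcal{G}=(V,E)$ be an undirected graph on $V=\{v_1,\dots,v_k\}$, let $\mathcal{S}$ be the set of valid states, and let $\mathcal{C}$ be a collection of correlation sets, each of size at most $2$, with associated mean losses $\mu_i^s$ (all as defined in the context). Let $\mathcal{K}\subseteq\mathcal{S}$ be a cover of $\mathcal{C}$. For $i,j\in[k]$ and $b\in\{0,1\}$, define $X^{i,j}_b:=\mu_i^{s_2}-\mu_i^{s_1}$, where $(s_1,s_2)$ is an $(i,j,b)$-pair contained in $\mathcal{K}$ (so $s_1(j)=0$, $s_2(j)=1$), whenever $\{i,j\}\in\mathcal{C}$ and $(i,j,b)$ is a dichotomy; set $X^{i,j}_b:=0$ otherwise. Then for every state $s\in\mathcal{S}$ and every $i\in[k]$ with $s(i)=b$, and every state $s'\in\mathcal{K}$ with $s'(i)=b$, $$\mu_i^s=\mu_i^{s'}+\sum_{j=1}^k X^{i,j}_b\big[\mathbf{1}(s(j)=1)\mathbf{1}(s'(j)=0)-\mathbf{1}(s(j)=0)\mathbf{1}(s'(j)=1)\big].$$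
   Context: Write $[k]=\{1,\dots,k\}$. The valid states are $\mathcal{S}=\{s\in\{0,1\}^k : \{v_i: s(i)=1\}\text{ is an independent set of }\mathcal{G}\}$ ($s(i)=1$ means criterion $i$ is ''fixed'', $s(i)=0$ ''unfixed''). A collection of correlation sets $\mathcal{C}=\{C_1,\dots,C_n\}$ consists of subsets of $[k]$ of size at most $m$ (here $m=2$). For each state $s$ and each $j\in[n]$ there is a parameter $\theta_j^s\ge 0$ which depends only on the restriction of $s$ to the coordinates in $C_j$ (i.e. $\theta_j^s=\theta_j^{s'}$ whenever $s$ and $s'$ agree on $C_j$). The mean loss of criterion $i$ at state $s$ is $\mu_i^s=\sum_{j=1}^n\theta_j^s\,\mathbf{1}(i\in C_j)$. For $i\neq j$ and $b\in\{0,1\}$, $(i,j,b)$ is a dichotomy if there exist $s,s'\in\mathcal{S}$ with $s(j)=0$, $s'(j)=1$ and $s(i)=s'(i)=b$. An $(i,j,b)$-pair is a pair $(s,s')$ of states that agree in every coordinate except $j$, with $s(i)=s'(i)=b$, $s(j)=0$, $s'(j)=1$. A subset $\mathcal{K}\subseteq\mathcal{S}$ is a cover of $\mathcal{C}$ if (1) for every $\{i,j\}\in\mathcal{C}$ and every dichotomy $(i,j,b)$ (in either order of $i,j$), $\mathcal{K}$ contains an $(i,j,b)$-pair, and (2) for every singleton $\{i\}\in\mathcal{C}$, $\mathcal{K}$ contains states $s,s'$ with $s(i)=0$, $s'(i)=1$ and $s(l)=s'(l)$ for all $l\neq i$. *)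

From HB Require Import structures.
From mathcomp Require Import all_boot all_order all_algebra.
Set Implicit Arguments. Unset Strict Implicit. Unset Printing Implicit Defensive.
Import Order.TTheory GRing.Theory Num.Theory.
Local Open Scope ring_scope.

(* Vertices / criteria are 'I_k (criterion i <-> v_i); a state is a boolean
   function on 'I_k, s i = true meaning "fixed". *)
Notation state k := {ffun 'I_k -> bool}.

Definition valid_state (k : nat) (e : rel 'I_k) (s : state k) : bool :=
  [forall i, forall j, (s i && s j) ==> ~~ e i j].

Definition mean_loss (R : pzSemiRingType) (k n : nat) (C : 'I_n -> {set 'I_k})
  (theta : 'I_n -> state k -> R) (i : 'I_k) (s : state k) : R :=
  \sum_(l < n) theta l s * (i \in C l)%:R.

Definition in_corr (k n : nat) (C : 'I_n -> {set 'I_k}) (A : {set 'I_k}) : Prop :=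
  exists l, C l = A.

Definition dichotomy (k : nat) (e : rel 'I_k) (i j : 'I_k) (b : bool) : Prop :=
  i != j /\ exists s s' : state k,
    [/\ valid_state e s && valid_state e s', s j = false, s' j = true,
        s i = b & s' i = b].

Definition ijb_pair (k : nat) (i j : 'I_k) (b : bool) (s s' : state k) : Prop :=
  [/\ forall l, l != j -> s l = s' l, s i = b, s' i = b, s j = false & s' j = true].

Definition is_cover (k n : nat) (e : rel 'I_k) (C : 'I_n -> {set 'I_k})
  (K : {set state k}) : Prop :=
  (forall (i j : 'I_k) (b : bool), in_corr C [set i; j] -> dichotomy e i j b ->
     exists s1 s2, [/\ s1 \in K, s2 \in K & ijb_pair i j b s1 s2]) /\
  (forall i : 'I_k, in_corr C [set i] ->
     exists s s', [/\ s \in K, s' \in K, s i = false, s' i = true &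
                      forall l, l != i -> s l = s' l]).

From HB Require Import structures.
From mathcomp Require Import all_boot all_order all_algebra.
Set Implicit Arguments. Unset Strict Implicit. Unset Printing Implicit Defensive.
Import Order.TTheory GRing.Theory Num.Theory.
Local Open Scope ring_scope.

(* Since s and s' agree at i, a correlation set C_l containing i can only
   change theta_l when C_l = {i, j} for a coordinate j where s and s' differ.
   Grouping the terms of mu_i^s - mu_i^{s'} by that partner j, the j-group is
   the same sum as for the (i,j,b)-pair (s1, s2) of K, up to the sign
   s(j) - s'(j); and for the pair only the sets containing both i and j
   contribute, so that group sum is X^{i,j}_b. *)

Lemma card_le2_set2 (T : finType) (A : {set T}) (i j : T) :
  (#|A| <= 2)%N -> i \in A -> j \in A -> i != j -> A = [set i; j].
Proof.
move=> cardA iA jA ij; apply/eqP; rewrite eq_sym eqEcard.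
by rewrite subUset !sub1set iA jA cards2 ij.
Qed.

Section MeanLoss.

Variables (R : pzRingType) (k n : nat) (e : rel 'I_k).
Variables (C : 'I_n -> {set 'I_k}) (theta : 'I_n -> state k -> R).
Hypothesis C_size : forall l, (#|C l| <= 2)%N.
Hypothesis theta_loc : forall l s s', valid_state e s -> valid_state e s' ->
  (forall i, i \in C l -> s i = s' i) -> theta l s = theta l s'.

Local Notation mu := (mean_loss C theta).
Local Notation valid := (valid_state e).

Lemma mean_lossB i s s' :
  mu i s - mu i s' = \sum_(l | i \in C l) (theta l s - theta l s').
Proof.
rewrite /mean_loss -sumrB [RHS]big_mkcond; apply: eq_bigr => l _.
by rewrite -mulrBl; case: (i \in C l); rewrite ?mulr1 ?mulr0.
Qed.

Lemma mean_lossB_agree_off i j t u : valid t -> valid u ->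
    (forall l, l != j -> t l = u l) ->
  mu i u - mu i t = \sum_(l | (i \in C l) && (j \in C l)) (theta l u - theta l t).
Proof.
move=> vt vu tu; rewrite mean_lossB (bigID (fun l => j \in C l)) /=.
rewrite [Z in _ + Z]big1 ?addr0 // => l /andP[_ jC].
rewrite (theta_loc vu vt) ?subrr // => x xC; apply/esym/tu.
by apply: contraNneq jC => <-.
Qed.

Lemma theta_pair_eq l i j t u : i \in C l -> j \in C l -> i != j ->
  valid t -> valid u -> t i = u i -> t j = u j -> theta l t = theta l u.
Proof.
move=> iC jC ij vt vu ti tj; apply: theta_loc => // x.
by rewrite (card_le2_set2 (C_size l) iC jC ij) !inE => /orP[] /eqP ->.
Qed.

Lemma mean_lossB_partners i s s' : valid s -> valid s' -> s i = s' i ->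
  mu i s - mu i s' =
    \sum_(j | s j != s' j) \sum_(l | (i \in C l) && (j \in C l))
      (theta l s - theta l s').
Proof.
move=> vs vs' si; rewrite mean_lossB (exchange_big_dep (fun l => i \in C l)) /=;
  last by move=> j l _ /andP[].
apply: eq_bigr => l iC.
have [j /andP[sj jC] | no_partner] := pickP (fun j => (s j != s' j) && (j \in C l)).
- have ij : i != j by apply: contraNneq sj => <-; rewrite si.
  rewrite (bigD1 j) /= ?sj ?iC ?jC // big1 ?addr0 // => j' /andP[/and3P[sj' _ j'C] j'j].
  move: j'C; rewrite (card_le2_set2 (C_size l) iC jC ij) !inE (negbTE j'j) orbF.
  by move/eqP=> j'i; rewrite j'i si eqxx in sj'.
- rewrite big_pred0 => [|j]; last by rewrite iC /= no_partner.
  rewrite (theta_loc vs vs') ?subrr // => x xC.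
  by apply/eqP; apply: contraFT (no_partner x) => ->.
Qed.

Variables (K : {set state k}) (X : 'I_k -> 'I_k -> bool -> R).
Hypothesis K_valid : forall s, s \in K -> valid s.
Hypothesis X_def : forall i j b,
  (in_corr C [set i; j] /\ dichotomy e i j b ->
     exists s1 s2, [/\ s1 \in K, s2 \in K, ijb_pair i j b s1 s2 &
       X i j b = mu i s2 - mu i s1]) /\
  (~ (in_corr C [set i; j] /\ dichotomy e i j b) -> X i j b = 0).

Lemma partner_sum_eq_X s s' i j b : valid s -> valid s' ->
    s i = b -> s' i = b -> s j != s' j ->
  \sum_(l | (i \in C l) && (j \in C l)) (theta l s - theta l s') =
    X i j b * ((s j && ~~ s' j)%:R - (~~ s j && s' j)%:R).
Proof.
move=> vs vs' si s'i sj.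
have ij : i != j by apply: contraNneq sj => <-; rewrite si s'i.
have [X_pair X_other] := X_def i j b.
have [l0 /andP[iC0 jC0] | no_set] := pickP (fun l => (i \in C l) && (j \in C l)).
- have corr : in_corr C [set i; j] by exists l0; apply: card_le2_set2.
  have dich : dichotomy e i j b.
    split=> //; move: sj; case Esj: (s j); case Es'j: (s' j) => // _.
    + by exists s', s; split; rewrite ?vs ?vs'.
    + by exists s, s'; split; rewrite ?vs ?vs'.
  have [s1 [s2 [/K_valid v1 /K_valid v2 [agree s1i s2i s1j s2j] ->]]] :=
    X_pair (conj corr dich).
  rewrite (mean_lossB_agree_off i v1 v2 agree) mulr_suml.
  apply: eq_bigr => l /andP[iC jC].
  have same := theta_pair_eq iC jC ij.
  move: sj; case sj: (s j); case s'j: (s' j) => // _; rewrite /=.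
  + rewrite (same s s2) ?si ?s2i ?sj ?s2j // (same s' s1) ?s'i ?s1i ?s'j ?s1j //.
    by rewrite subr0 mulr1.
  + rewrite (same s s1) ?si ?s1i ?sj ?s1j // (same s' s2) ?s'i ?s2i ?s'j ?s2j //.
    by rewrite sub0r mulrN1 opprB.
- rewrite big_pred0 // X_other ?mul0r // => -[[l Cl] _].
  by move: (no_set l); rewrite Cl !inE !eqxx orbT.
Qed.

End MeanLoss.

Theorem theorem1 (R : realFieldType) (k n : nat) (e : rel 'I_k)
  (e_sym : symmetric e) (e_irr : irreflexive e)
  (C : 'I_n -> {set 'I_k}) (C_size : forall l, (#|C l| <= 2)%N)
  (theta : 'I_n -> state k -> R)
  (theta_ge0 : forall l s, valid_state e s -> 0 <= theta l s)
  (theta_loc : forall l s s', valid_state e s -> valid_state e s' ->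
       (forall i, i \in C l -> s i = s' i) -> theta l s = theta l s')
  (K : {set state k})
  (K_valid : forall s, s \in K -> valid_state e s)
  (K_cover : is_cover e C K)
  (X : 'I_k -> 'I_k -> bool -> R)
  (X_def : forall i j b,
     (in_corr C [set i; j] /\ dichotomy e i j b ->
        exists s1 s2, [/\ s1 \in K, s2 \in K, ijb_pair i j b s1 s2 &
          X i j b = mean_loss C theta i s2 - mean_loss C theta i s1]) /\
     (~ (in_corr C [set i; j] /\ dichotomy e i j b) -> X i j b = 0)) :
  forall (s : state k) (i : 'I_k) (b : bool), valid_state e s -> s i = b ->
  forall s' : state k, s' \in K -> s' i = b ->
    mean_loss C theta i s =
      mean_loss C theta i s' +
      \sum_(j < k) X i j b * ((s j && ~~ s' j)%:R - (~~ s j && s' j)%:R).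
Proof.
move=> s i b vs si s' s'K s'i; have vs' := K_valid _ s'K.
rewrite -[LHS](subrK (mean_loss C theta i s')) addrC; congr (_ + _).
rewrite (mean_lossB_partners C_size theta_loc vs vs') ?si ?s'i //.
rewrite [RHS](bigID (fun j => s j != s' j)) /= [Z in _ = _ + Z]big1 ?addr0.
- apply: eq_bigr => j sj.
  exact: (partner_sum_eq_X C_size theta_loc K_valid X_def vs vs' si s'i sj).
- by move=> j /negPn/eqP ->; case: (s' j); rewrite subrr mulr0.
Qed.
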